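(* Let $0<\varepsilon_0\le1$, $N\ge1$, and for $m=1,\dots,N$ let $A_m$ be an $(h_{A_m},k_{A_m},\delta_{A_m},G_{A_m},\varepsilon_{A_m})$-expansion with coefficients $a_{A_m,l}$, $h_{A_m}\le l\le k_{A_m}$ (set $a_{A_m,l}=0$ outside this range). Then for every $n=1,\dots,N$: (i) $B_n=A_1+\cdots+A_n$ is an $(h_{B_n},k_{B_n},\delta_{B_n},G_{B_n},\varepsilon_{B_n})$-expansion with $h_{B_n}=\min_{m\le n}h_{A_m}$, $k_{B_n}=\min_{m\le n}k_{A_m}$, coefficients $b_{l,n}=\sum_{m=1}^n a_{A_m,l}$, $\delta_{B_n}=\min_{m\in\mathbb{K}_n}\delta_{A_m}\ \ (\ge\min_{1\le m\le n}\delta_{A_m})$ where $\mathbb{K}_n=\{m\le n: k_{A_m}=\min(k_{A_1},\dots,k_{A_n})\}$, $\varepsilon_{B_n}=\min(\varepsilon_{A_1},\dots,\varepsilon_{A_n})$, and $G_{B_n}=\sum_{1\le i\le n}\Big(G_{A_i}\varepsilon_{B_n}^{k_{A_i}+\delta_{A_i}-k_{B_n}-\delta_{B_n}}+\sum_{k_{B_n}<j\le k_{A_i}}|a_{A_i,j}|\varepsilon_{B_n}^{j-k_{B_n}-\delta_{B_n}}\Big)$. (ii) $C_n=A_1\times\cdots\times A_n$ is an $(h_{C_n},k_{C_n},\delta_{C_n},G_{C_n},\varepsilon_{C_n})$-expansion with $h_{C_n}=\sum_{m\le n}h_{A_m}$, $k_{C_n}=\min_{1\le l\le n}\big(k_{A_l}+\sum_{r\le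 n,r\ne l}h_{A_r}\big)$, coefficients $c_{r,n}=\sum_{l_1+\cdots+l_n=r,\ h_{A_i}\le l_i\le k_{A_i}}\prod_{i=1}^n a_{A_i,l_i}$, $\delta_{C_n}=\min_{m\in\mathbb{L}_n}\delta_{A_m}\ (\ge\min_{1\le m\le n}\delta_{A_m})$ where $\mathbb{L}_n=\{m\le n: k_{A_m}+\sum_{r\le n,r\ne m}h_{A_r}=k_{C_n}\}$, $\varepsilon_{C_n}=\min_{i\le n}\varepsilon_{A_i}$, and $G_{C_n}=\sum_{k_{C_n}<l_1+\cdots+l_n,\ h_{A_i}\le l_i\le k_{A_i}}\prod_{i=1}^n|a_{A_i,l_i}|\,\varepsilon_{C_n}^{l_1+\cdots+l_n-k_{C_n}-\delta_{C_n}}+\sum_{1\le j\le n}\prod_{1\le i\le n,i\ne j}\Big(\sum_{h_{A_i}\le l\le k_{A_i}}|a_{A_i,l}|\varepsilon_{C_n}^{l}+G_{A_i}\varepsilon_{C_n}^{k_{A_i}+\delta_{A_i}}\Big)G_{A_j}\varepsilon_{C_n}^{k_{A_j}+\delta_{A_j}-k_{C_n}-\delta_{C_n}}$. (iii) The parameters $\delta_{B_n},G_{B_n},\varepsilon_{B_n}$ and $\delta_{C_n},G_{C_n},\varepsilon_{C_n}$ are invariant under any permutation of the summands, respectively factors.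
   Context: Let $0<\varepsilon_0\le1$. A function $A:(0,\varepsilon_0]\to\mathbb{R}$ is an $(h,k,\delta,G,\varepsilon_A)$-expansion with coefficients $a_h,\dots,a_k$ (integers $h\le k$, reals $a_l$, $\delta\in(0,1]$, $G\in(0,\infty)$, $\varepsilon_A\in(0,\varepsilon_0]$) if the remainder $o_A(\varepsilon):=A(\varepsilon)-\sum_{l=h}^k a_l\varepsilon^l$ satisfies $|o_A(\varepsilon)|\le G\varepsilon^{k+\delta}$ for $0<\varepsilon\le\varepsilon_A$. *)

From HB Require Import structures.
From mathcomp Require Import all_boot all_order all_algebra.
From mathcomp Require Import reals exp.
Set Implicit Arguments. Unset Strict Implicit. Unset Printing Implicit Defensive.
Import Order.TTheory GRing.Theory Num.Theory.
Local Open Scope ring_scope.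

Definition idx (n : nat) : seq nat := iota 1 n.

Definition zrange (lo hi : int) : seq int :=
  if lo <= hi then [seq lo + (i%:Z) | i <- iota 0 `|hi - lo|.+1] else [::].

Section Params.
Context {R : realType}.

Definition zminl (f : nat -> int) (s : seq nat) : int :=
  \big[Num.min/f (head 0%N s)]_(m <- s) f m.
Definition rminl (f : nat -> R) (s : seq nat) : R :=
  \big[Num.min/f (head 0%N s)]_(m <- s) f m.

Definition pwz (x : R) (l : int) : R := powR x (l%:~R).

Definition is_expansion (eps0 : R) (A : R -> R) (h k : int) (c : int -> R)
    (delta G epsA : R) : Prop :=
  [/\ h <= k, 0 < delta <= 1, 0 < G, 0 < epsA <= eps0 &
      forall x : R, 0 < x <= epsA ->
        `|A x - \sum_(l <- zrange h k) c l * pwz x l| <= G * powR x (k%:~R + delta)].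

Variables (h k : nat -> int) (a : nat -> int -> R) (d G ep : nat -> R).

Definition ext (m : nat) (l : int) : R :=
  if (h m <= l) && (l <= k m) then a m l else 0.

Definition hB (n : nat) : int := zminl h (idx n).
Definition kB (n : nat) : int := zminl k (idx n).
Definition bcoef (n : nat) (l : int) : R := \sum_(m <- idx n) ext m l.
Definition KB (n : nat) : seq nat := [seq m <- idx n | k m == kB n].
Definition dB (n : nat) : R := rminl d (KB n).
Definition eB (n : nat) : R := rminl ep (idx n).
Definition GB (n : nat) : R :=
  \sum_(i <- idx n)
    (G i * powR (eB n) ((k i)%:~R + d i - (kB n)%:~R - dB n)
     + \sum_(j <- zrange (kB n + 1) (k i))
         `|ext i j| * powR (eB n) (j%:~R - (kB n)%:~R - dB n)).

(* all multi-indices (l_1,...,l_n) with h i <= l_i <= k i, as functions on 1..n *)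
Fixpoint box (n : nat) : seq (nat -> int) :=
  match n with
  | 0 => [:: fun _ => 0]
  | n'.+1 => [seq (fun i => if i == n'.+1 then j else l i)
               | l <- box n', j <- zrange (h n'.+1) (k n'.+1)]
  end.
Definition lsum (n : nat) (l : nat -> int) : int := \sum_(i <- idx n) l i.

Definition hC (n : nat) : int := \sum_(m <- idx n) h m.
Definition kC (n : nat) : int :=
  zminl (fun m => k m + \sum_(r <- idx n | r != m) h r) (idx n).
Definition ccoef (n : nat) (r : int) : R :=
  \sum_(l <- box n | lsum n l == r) \prod_(i <- idx n) a i (l i).
Definition LC (n : nat) : seq nat :=
  [seq m <- idx n | k m + \sum_(r <- idx n | r != m) h r == kC n].
Definition dC (n : nat) : R := rminl d (LC n).
Definition eC (n : nat) : R := rminl ep (idx n).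
Definition GC (n : nat) : R :=
  \sum_(l <- box n | kC n < lsum n l)
      (\prod_(i <- idx n) `|a i (l i)|)
        * powR (eC n) ((lsum n l)%:~R - (kC n)%:~R - dC n)
  + \sum_(j <- idx n)
      (\prod_(i <- idx n | i != j)
          (\sum_(l <- zrange (h i) (k i)) `|a i l| * pwz (eC n) l
           + G i * powR (eC n) ((k i)%:~R + d i)))
      * G j * powR (eC n) ((k j)%:~R + d j - (kC n)%:~R - dC n).

End Params.

Definition perm_range (n : nat) (s : nat -> nat) : Prop :=
  (forall m, (1 <= m <= n)%N -> (1 <= s m <= n)%N) /\
  (forall m1 m2, (1 <= m1 <= n)%N -> (1 <= m2 <= n)%N -> s m1 = s m2 -> m1 = m2).

(* Write each A_m as its polynomial part P_m plus a remainder of size at most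
   G_m x^(k_m + d_m).  Everything rests on the estimate x^e <= eps^(e - c) x^c for
   0 < x <= eps and c <= e, which turns excess order into a power of eps.
   For the sum, each P_m is cut at the least order kB: the discarded monomials have
   degree >= kB + 1 >= kB + dB, and the remainders of summands with k_m > kB gain an
   integer gap of at least 1 >= dB.
   For the product, A_1...A_n - P_1...P_n telescopes into
   sum_j (prod_(i != j) ...) (A_j - P_j), every factor being bounded by the majorant
   S_i(x) = sum_l |a_(i,l)| x^l + G_i x^(k_i + d_i), and S_i(x) x^(-h_i) increases in x;
   P_1...P_n is expanded over the box of multi-indices and cut at kC.
   All constants are minima, sums and products over the whole index range, hence
   invariant under permutations. *)
Set Warnings "-notation-overridden,-ambiguous-paths".
From HB Require Import structures.
From mathcomp Require Import all_boot all_order all_algebra.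
From mathcomp Require Import reals exp.
From mathcomp Require Import zify ring lra.
Import Order.TTheory GRing.Theory Num.Theory.
Local Open Scope ring_scope.

Local Notation minl f s := (\big[Num.min/f (head 0%N s)]_(m <- s) f m).

Lemma mem_zrange (lo hi x : int) : (x \in zrange lo hi) = (lo <= x <= hi).
Proof.
rewrite /zrange; case: ifP => lohi; last by rewrite in_nil; lia.
apply/mapP/idP => [[i]|lexh]; first by rewrite mem_iota => /andP[_ ?] ->; lia.
by exists `|x - lo|%N; [rewrite mem_iota|]; lia.
Qed.

Lemma zrange_uniq (lo hi : int) : uniq (zrange lo hi).
Proof.
rewrite /zrange; case: ifP => // _.
by rewrite map_inj_uniq ?iota_uniq // => i j /addrI [].
Qed.

Lemma perm_zrange (lo hi : int) (s : seq int) :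
  uniq s -> (forall x, (x \in s) = (lo <= x <= hi)) -> perm_eq (zrange lo hi) s.
Proof.
move=> s_uniq mem_s; apply: uniq_perm => //; first exact: zrange_uniq.
by move=> x; rewrite mem_zrange mem_s.
Qed.

Section BigZrange.
Variables (T : Type) (id0 : T) (op : Monoid.com_law id0).

Lemma big_zrange_cat (lo mid hi : int) (F : int -> T) :
  lo <= mid + 1 -> mid <= hi ->
  \big[op/id0]_(l <- zrange lo hi) F l =
  op (\big[op/id0]_(l <- zrange lo mid) F l) (\big[op/id0]_(l <- zrange (mid + 1) hi) F l).
Proof.
move=> lo_mid mid_hi; rewrite -big_cat; apply/perm_big/perm_zrange => [|x].
  rewrite cat_uniq !zrange_uniq /= andbT; apply/hasPn => x.
  by rewrite !mem_zrange; lia.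
by rewrite mem_cat !mem_zrange; lia.
Qed.

Lemma big_zrange_widen (lo hi lo' hi' : int) (F : int -> T) :
  lo' <= lo -> hi <= hi' -> (forall l, ~~ (lo <= l <= hi) -> F l = id0) ->
  \big[op/id0]_(l <- zrange lo' hi') F l = \big[op/id0]_(l <- zrange lo hi) F l.
Proof.
move=> lo_lo' hi_hi' F0; rewrite (bigID [pred l | lo <= l <= hi]) /=.
rewrite [X in op _ X]big1 ?Monoid.mulm1 // -big_filter.
apply/esym/perm_big/perm_zrange => [|x]; first by rewrite filter_uniq ?zrange_uniq.
by rewrite mem_filter mem_zrange; lia.
Qed.

Lemma big_zrange_pred1 (lo hi v : int) (F : int -> T) :
  \big[op/id0]_(r <- zrange lo hi | v == r) F r = if lo <= v <= hi then F v else id0.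
Proof.
case: ifP => v_in; last by rewrite big1_seq // => r /andP[/eqP <-]; rewrite mem_zrange v_in.
rewrite -big_filter (@eq_filter _ _ (pred1 v)) => [|r]; last by rewrite /= eq_sym.
by rewrite filter_pred1_uniq ?zrange_uniq ?mem_zrange // big_seq1.
Qed.

End BigZrange.

Section MinOverList.
Context {T : realDomainType}.
Implicit Types (f g : nat -> T) (s t : seq nat).

Lemma minl_le f s m : m \in s -> minl f s <= f m.
Proof. by move=> ms; apply: ge_bigmin_seq. Qed.

Lemma minl_mem f {s} : s != [::] -> exists2 m, m \in s & minl f s = f m.
Proof.
case: s => // y s _; rewrite big_seq.
elim/big_ind: _ => [|u v [m ms ->] [m' m's ->]|m ms]; last by exists m.
- by exists y; rewrite ?inE ?eqxx.
- by rewrite minEle; case: ifP => _; [exists m | exists m'].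
Qed.

Lemma eq_minl_in f g s : s != [::] -> {in s, f =1 g} -> minl f s = minl g s.
Proof.
case: s => // y s _ fg /=; rewrite fg ?inE ?eqxx //.
exact: eq_big_seq.
Qed.

Lemma minl_comp f (g : nat -> nat) s : s != [::] -> minl (f \o g) s = minl f (map g s).
Proof. by case: s => // y s _; rewrite big_map. Qed.

Lemma eq_minl_mem f s t : s =i t -> s != [::] -> minl f s = minl f t.
Proof.
move=> st s_nil; have t_nil : t != [::].
  case: s st s_nil => // y s' st _; apply/eqP => t0.
  by move: (st y); rewrite t0 inE eqxx.
suff minl_sub s' t' : {subset t' <= s'} -> t' != [::] -> minl f s' <= minl f t'.
  by apply/le_anti; rewrite !minl_sub // => x; rewrite st.
move=> ts' t'_nil; have [m mt' ->] := @minl_mem f t' t'_nil.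
by apply/minl_le/ts'.
Qed.

End MinOverList.

Lemma mem_idx n m : (m \in idx n) = (1 <= m <= n)%N.
Proof. by rewrite /idx mem_iota; lia. Qed.

Lemma idx_uniq n : uniq (idx n).
Proof. exact: iota_uniq. Qed.

Lemma idxS n : idx n.+1 = rcons (idx n) n.+1.
Proof. by rewrite /idx -cats1 -{1}[n.+1]addn1 iotaD add1n. Qed.

Lemma idx_eqSF n i : i \in idx n -> (i == n.+1) = false.
Proof. by rewrite mem_idx; lia. Qed.

Lemma idx_eq0 n : (idx n == [::]) = (n == 0)%N.
Proof. by case: n. Qed.

Section PermRange.
Context {n : nat} {s : nat -> nat} (s_perm : perm_range n s).

Lemma perm_idx : perm_eq (map s (idx n)) (idx n).
Proof.
case: s_perm => s_idx s_inj.
have s_uniq : uniq (map s (idx n)).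
  by rewrite map_inj_in_uniq ?idx_uniq // => x y; rewrite !mem_idx; apply: s_inj.
have s_sub : {subset map s (idx n) <= idx n}.
  by move=> y /mapP[x]; rewrite !mem_idx => x_idx ->; apply: s_idx.
have [_ s_full] := uniq_min_size s_uniq s_sub (eq_leq (esym (size_map s (idx n)))).
by apply: uniq_perm; rewrite ?idx_uniq.
Qed.

Lemma perm_idx_onto j : j \in idx n -> exists2 i, i \in idx n & s i = j.
Proof.
by rewrite -(perm_mem perm_idx) => /mapP[i i_idx ->]; exists i.
Qed.

Lemma big_idx_perm {T : Type} {id0 : T} {op : Monoid.com_law id0} (F : nat -> T) :
  \big[op/id0]_(i <- idx n) F (s i) = \big[op/id0]_(i <- idx n) F i.
Proof.
transitivity (\big[op/id0]_(i <- map s (idx n)) F i); first by rewrite big_map.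
exact: perm_big perm_idx.
Qed.

Lemma big_idx_perm_neq {T : Type} {id0 : T} {op : Monoid.com_law id0} (F : nat -> T) j :
  j \in idx n ->
  \big[op/id0]_(i <- idx n | i != j) F (s i) = \big[op/id0]_(i <- idx n | i != s j) F i.
Proof.
move=> j_idx; transitivity (\big[op/id0]_(i <- map s (idx n) | i != s j) F i).
  rewrite big_map big_seq_cond [RHS]big_seq_cond; apply: eq_bigl => i /=.
  case i_idx: (i \in idx n) => //=; congr negb; apply/eqP/eqP => [-> // | sij].
  by case: s_perm => _ s_inj; apply: s_inj; rewrite -?mem_idx.
exact: perm_big perm_idx.
Qed.

End PermRange.

Section RealPowers.
Context {R : realType}.
Implicit Types (x y p q e c : R).

Lemma gt0_powRD x p q : 0 < x -> powR x (p + q) = powR x p * powR x q.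
Proof. by move=> x_gt0; rewrite powRD // (gt_eqF x_gt0) implybT. Qed.

Lemma gt0_powR_sum x (I : Type) (s : seq I) (P : pred I) (f : I -> R) : 0 < x ->
  powR x (\sum_(i <- s | P i) f i) = \prod_(i <- s | P i) powR x (f i).
Proof.
move=> x_gt0; elim: s => [|i s IHs]; first by rewrite !big_nil powRr0.
by rewrite !big_cons; case: ifP => // _; rewrite gt0_powRD // IHs.
Qed.

Lemma gt0_ler_powR e x y : 0 <= e -> 0 < x <= y -> powR x e <= powR y e.
Proof.
move=> e_ge0 /andP[x_gt0 xy]; apply: ge0_ler_powR; rewrite // nnegrE ltW //.
exact: lt_le_trans xy.
Qed.

Lemma powR_le_split x y e p q : 0 < x <= y -> p + q <= e ->
  powR x e <= powR y (e - p - q) * powR x (p + q).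
Proof.
move=> xy pqe; have x_gt0 : 0 < x by case/andP: xy.
have e_split : e = (e - p - q) + (p + q) by ring.
rewrite {1}e_split gt0_powRD //; apply: ler_wpM2r; first exact: powR_ge0.
by apply: gt0_ler_powR => //; lra.
Qed.

Lemma powR_swap_le x y e p : 0 < x <= y -> p <= e ->
  powR x e * powR y p <= powR y e * powR x p.
Proof.
move=> /andP[x_gt0 xy] pe; have y_gt0 : 0 < y by apply: lt_le_trans xy.
have e_split : e = (e - p) + p by ring.
rewrite e_split (gt0_powRD _ _ _ x_gt0) (gt0_powRD _ _ _ y_gt0).
have -> : powR x (e - p) * powR x p * powR y p = powR x (e - p) * (powR x p * powR y p) by ring.
have -> : powR y (e - p) * powR y p * powR x p = powR y (e - p) * (powR x p * powR y p) by ring.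
apply: ler_wpM2r; first by rewrite mulr_ge0 ?powR_ge0.
by apply: gt0_ler_powR; rewrite ?x_gt0 //; lra.
Qed.

Lemma pwz_gt0 x l : 0 < x -> 0 < pwz x l.
Proof. exact: powR_gt0. Qed.

Lemma pwz_sum x (I : Type) (s : seq I) (P : pred I) (f : I -> int) : 0 < x ->
  pwz x (\sum_(i <- s | P i) f i) = \prod_(i <- s | P i) pwz x (f i).
Proof. by move=> x_gt0; rewrite /pwz rmorph_sum gt0_powR_sum. Qed.

Lemma int_gap_ge0 (a b : int) (da db : R) : a <= b -> 0 < da -> db <= 1 ->
  (a = b -> db <= da) -> 0 <= b%:~R + da - a%:~R - db.
Proof.
move=> ab da_gt0 db_le1 eq_ab; have [ab_eq|ne_ab] := eqVneq a b.
  by have := eq_ab ab_eq; rewrite ab_eq; lra.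
have : a + 1 <= b by lia.
by rewrite -(ler_int R) intrD; lra.
Qed.

End RealPowers.

Lemma eq_big_all {T I : Type} {id0 : T} {op : T -> T -> T} {s : seq I} {Q P : pred I}
    {F G : I -> T} :
  all Q s -> (forall i, Q i -> F i = G i) ->
  \big[op/id0]_(i <- s | P i) F i = \big[op/id0]_(i <- s | P i) G i.
Proof.
elim: s => [|i s IHs] /=; first by rewrite !big_nil.
by move=> /andP[Qi Qs] FG; rewrite !big_cons IHs // FG.
Qed.

Lemma all_allpairs (S T U : Type) (p : pred U) (f : S -> T -> U) (s : seq S)
    (t : S -> seq T) :
  all p [seq f x y | x <- s, y <- t x] = all (fun x => all (fun y => p (f x y)) (t x)) s.
Proof. by elim: s => [|x s IHs] //=; rewrite all_cat IHs all_map. Qed.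

Lemma sumr_gt0_seq (I : eqType) (R : numDomainType) (s : seq I) (F : I -> R) :
  s != [::] -> (forall i, i \in s -> 0 < F i) -> 0 < \sum_(i <- s) F i.
Proof.
case: s => // y s _ F_gt0; rewrite big_cons.
apply: ltr_wpDr; last exact/F_gt0/mem_head.
rewrite big_seq; apply: sumr_ge0 => i i_s.
by apply/ltW/F_gt0; rewrite inE i_s orbT.
Qed.

Lemma telescope_prod_le {I : eqType} {R : numDomainType} {s : seq I} (a b c : I -> R) :
  uniq s -> (forall i, i \in s -> `|a i| <= c i /\ `|b i| <= c i) ->
  `|\prod_(i <- s) a i - \prod_(i <- s) b i| <=
  \sum_(j <- s) (\prod_(i <- s | i != j) c i) * `|a j - b j|.
Proof.
elim: s => [|y s IHs] /=; first by rewrite !big_nil subrr normr0.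
move=> /andP[y_s s_uniq] abc.
have abc_s i : i \in s -> `|a i| <= c i /\ `|b i| <= c i.
  by move=> i_s; apply: abc; rewrite inE i_s orbT.
have [_ by_le] := abc y (mem_head y s).
have split_diff : \prod_(i <- y :: s) a i - \prod_(i <- y :: s) b i =
    (a y - b y) * \prod_(i <- s) a i + b y * (\prod_(i <- s) a i - \prod_(i <- s) b i).
  by rewrite !big_cons; ring.
have prod_neq_y : \prod_(i <- s | i != y) c i = \prod_(i <- s) c i.
  rewrite big_seq_cond [RHS]big_seq; apply: eq_bigl => i.
  by case: eqP => [->|_]; rewrite ?andbT ?andbF ?(negbTE y_s).
have sum_neq_j : \sum_(j <- s) (\prod_(i <- y :: s | i != j) c i) * `|a j - b j| =
    c y * \sum_(j <- s) (\prod_(i <- s | i != j) c i) * `|a j - b j|.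
  rewrite mulr_sumr; apply: eq_big_seq => j j_s.
  by rewrite big_cons ifT ?mulrA //; apply: contraNneq y_s => ->.
rewrite split_diff big_cons big_cons eqxx /= prod_neq_y sum_neq_j.
apply: (le_trans (ler_normD _ _)); rewrite !normrM; apply: lerD.
  rewrite mulrC ler_wpM2r // normr_prod big_seq [X in _ <= X]big_seq.
  by apply: ler_prod => i i_s; rewrite normr_ge0; case: (abc_s i i_s).
by apply: ler_pM => //; apply: IHs.
Qed.

Lemma prod_le_scaled {R : realType} (I : eqType) (s : seq I) (P : pred I) (S T e : I -> R)
    (x y : R) :
  0 < x -> 0 < y -> (forall i, i \in s -> P i -> 0 <= S i) ->
  (forall i, i \in s -> P i -> S i * powR y (e i) <= T i * powR x (e i)) ->
  (\prod_(i <- s | P i) S i) * powR y (\sum_(i <- s | P i) e i) <=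
  (\prod_(i <- s | P i) T i) * powR x (\sum_(i <- s | P i) e i).
Proof.
move=> x_gt0 y_gt0 S_ge0 ST; rewrite !gt0_powR_sum // -!big_split /=.
rewrite big_seq_cond [X in _ <= X]big_seq_cond; apply: ler_prod => i /andP[i_s Pi].
by rewrite mulr_ge0 ?powR_ge0 ?S_ge0 ?ST.
Qed.

(* Cutting an expansion of order [k] down to order [K]: the discarded monomials
   [c j x^j], [K < j], join the remainder. *)
Lemma trunc_remainder_le (R : realType) (u : R) (h k h' K : int) (c c' : int -> R)
    (delta G D x y : R) :
  (forall l, c' l = if h <= l <= k then c l else 0) ->
  h' <= h -> h' <= K -> K <= k -> 0 <= k%:~R + delta - K%:~R - D -> D <= 1 ->
  0 < x <= y -> 0 <= G ->
  `|u - \sum_(l <- zrange h k) c l * pwz x l| <= G * powR x (k%:~R + delta) ->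
  `|u - \sum_(l <- zrange h' K) c' l * pwz x l| <=
  (G * powR y (k%:~R + delta - K%:~R - D)
   + \sum_(j <- zrange (K + 1) k) `|c' j| * powR y (j%:~R - K%:~R - D))
  * powR x (K%:~R + D).
Proof.
move=> c'E hh' h'K Kk gap D_le1 xy G_ge0 u_near.
have x_gt0 : 0 < x by case/andP: xy.
have poly_split : \sum_(l <- zrange h k) c l * pwz x l =
    \sum_(l <- zrange h' K) c' l * pwz x l + \sum_(j <- zrange (K + 1) k) c' j * pwz x j.
  rewrite -(@big_zrange_cat _ _ _ h' K k); [|lia|lia].
  rewrite (@big_zrange_widen _ _ _ h k h' k) // => [|l]; last first.
    by rewrite c'E => /negbTE->; rewrite mul0r.
  by apply: eq_big_seq => l; rewrite mem_zrange c'E => ->.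
have -> : u - \sum_(l <- zrange h' K) c' l * pwz x l =
    (u - \sum_(l <- zrange h k) c l * pwz x l) + \sum_(j <- zrange (K + 1) k) c' j * pwz x j.
  by rewrite poly_split; ring.
rewrite mulrDl.
apply: (le_trans (ler_normD _ _)); apply: lerD.
  apply: (le_trans u_near); rewrite -mulrA; apply: ler_wpM2l; first exact: G_ge0.
  by apply: powR_le_split; lra.
rewrite mulr_suml; apply: (le_trans (ler_norm_sum _ _ _)).
rewrite big_seq [X in _ <= X]big_seq; apply: ler_sum => j.
rewrite mem_zrange normrM (gtr0_norm (pwz_gt0 _ _ x_gt0)) -mulrA => /andP[Kj _].
apply: ler_wpM2l; first exact: normr_ge0.
apply: powR_le_split => //.
have : (K + 1)%:~R <= j%:~R :> R by rewrite ler_int.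
by rewrite intrD; lra.
Qed.

Section Box.
Variables (h k : nat -> int).

Definition in_box n (l : nat -> int) : bool := all (fun i => h i <= l i <= k i) (idx n).

Lemma box_in_box n : all (in_box n) (box h k n).
Proof.
elim: n => [|n IHn] //; rewrite /= all_allpairs; apply: sub_all IHn => l l_box.
apply/allP => j; rewrite mem_zrange => j_range.
rewrite /in_box idxS all_rcons eqxx j_range /=.
by apply/allP => i i_idx; rewrite idx_eqSF //; apply: (allP l_box).
Qed.

Lemma lsum_ge_hC n l : in_box n l -> hC h n <= lsum n l.
Proof.
move=> /allP l_box; rewrite /hC /lsum big_seq [X in _ <= X]big_seq.
by apply: ler_sum => i i_idx; case/andP: (l_box i i_idx).
Qed.

Lemma sum_box_prod (R : comPzRingType) (F : nat -> int -> R) n :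
  \sum_(l <- box h k n) \prod_(i <- idx n) F i (l i) =
  \prod_(i <- idx n) \sum_(j <- zrange (h i) (k i)) F i j.
Proof.
elim: n => [|n IHn]; first by rewrite /idx /= big_cons !big_nil addr0.
rewrite /= big_allpairs_dep idxS big_rcons /= -IHn mulr_suml.
apply: eq_bigr => l _; rewrite mulr_sumr; apply: eq_bigr => j _.
rewrite big_rcons /= eqxx; congr (_ * _).
by apply: eq_big_seq => i i_idx; rewrite idx_eqSF.
Qed.

(* [box] lists functions, which have no decidable equality; to reindex sums over
   it we pass to the integer sequences [l 1; ...; l n]. *)
Definition seq_of_fun n (l : nat -> int) : seq int := map l (idx n).
Definition fun_of_seq (t : seq int) : nat -> int := fun i => nth 0 t i.-1.

Lemma seq_of_funK n l i : i \in idx n -> fun_of_seq (seq_of_fun n l) i = l i.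
Proof.
rewrite mem_idx => i_idx; rewrite /fun_of_seq /seq_of_fun /idx.
rewrite (nth_map 0%N) ?size_iota; last by lia.
by rewrite nth_iota; [congr l; lia | lia].
Qed.

Fixpoint box_tuples n : seq (seq int) :=
  if n is n'.+1 then [seq rcons t j | t <- box_tuples n', j <- zrange (h n) (k n)]
  else [:: [::]].

Lemma map_seq_of_fun_box n : map (seq_of_fun n) (box h k n) = box_tuples n.
Proof.
elim: n => [//|n IHn]; rewrite /= -IHn map_allpairs allpairs_mapl.
congr flatten; apply: eq_map => l; apply: eq_map => j.
rewrite /seq_of_fun idxS map_rcons /= eqxx; congr rcons.
by apply/eq_in_map => i i_idx; rewrite idx_eqSF.
Qed.

Lemma mem_box_tuples n t :
  (t \in box_tuples n) =
  (size t == n) && all (fun i => fun_of_seq t i \in zrange (h i) (k i)) (idx n).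
Proof.
have fun_of_seq_rcons (t' : seq int) j i :
    i \in idx (size t') -> fun_of_seq (rcons t' j) i = fun_of_seq t' i.
  rewrite mem_idx /fun_of_seq nth_rcons; case: i => //= i i_le.
  by rewrite ifT //; lia.
have fun_of_seq_rcons_last (t' : seq int) j i :
    i = (size t').+1 -> fun_of_seq (rcons t' j) i = j.
  by move=> ->; rewrite /fun_of_seq nth_rcons ltnn eqxx.
elim: n t => [|n IHn] t; first by case: t.
apply/idP/idP => [/allpairsP[[t' j] [t'_box j_range ->]]|].
  move: t'_box; rewrite IHn => /andP[/eqP t'_size t'_range].
  rewrite size_rcons t'_size eqxx idxS all_rcons (fun_of_seq_rcons_last t' j n.+1) ?t'_size //.
  apply/and3P; split => //.
  by apply/allP => i i_idx; rewrite fun_of_seq_rcons ?t'_size //; apply: (allP t'_range).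
case/lastP: t => [|t' j]; first by case/andP.
rewrite size_rcons eqSS idxS all_rcons => /andP[/eqP t'_size].
rewrite (fun_of_seq_rcons_last t' j n.+1) ?t'_size // => /andP[j_range t'_range].
apply/allpairsP; exists (t', j); split => //=; rewrite IHn t'_size eqxx /=.
by apply/allP => i i_idx; rewrite -(fun_of_seq_rcons t' j) ?t'_size //; apply: (allP t'_range).
Qed.

Lemma box_tuples_uniq n : uniq (box_tuples n).
Proof.
elim: n => [//|n IHn] /=; apply: allpairs_uniq => //; first exact: zrange_uniq.
by move=> [t1 j1] [t2 j2] _ _ /= /rcons_inj [-> ->].
Qed.

Lemma size_box_tuples n :
  size (box_tuples n) = (\prod_(i <- idx n) size (zrange (h i) (k i)))%N.
Proof.
elim: n => [|n IHn]; first by rewrite /idx /= big_nil.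
by rewrite /= size_allpairs IHn idxS big_rcons.
Qed.

End Box.

Arguments lsum_ge_hC {h k n l}.

Section BoxPerm.
Context {h k : nat -> int} {n : nat} {s : nat -> nat} (s_perm : perm_range n s).

Lemma perm_idx_mem i : i \in idx n -> s i \in idx n.
Proof. by rewrite !mem_idx; case: s_perm => s_idx _; apply: s_idx. Qed.

Lemma perm_box_tuples :
  perm_eq [seq seq_of_fun n (fun_of_seq t \o s) | t <- box_tuples h k n]
          (box_tuples (h \o s) (k \o s) n).
Proof.
have fun_of_seq_perm t i :
    i \in idx n -> fun_of_seq (seq_of_fun n (fun_of_seq t \o s)) i = fun_of_seq t (s i).
  exact: seq_of_funK.
have perm_inj : {in box_tuples h k n &, injective (fun t => seq_of_fun n (fun_of_seq t \o s))}.
  move=> t t'; rewrite !mem_box_tuples => /andP[/eqP t_size _] /andP[/eqP t'_size _] eq_ts.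
  apply: (@eq_from_nth _ 0); rewrite ?t_size ?t'_size // => p p_lt.
  have [i i_idx si] : exists2 i, i \in idx n & s i = p.+1.
    by apply: (perm_idx_onto s_perm); rewrite mem_idx; lia.
  by have := congr1 (fun_of_seq^~ i) eq_ts; rewrite !fun_of_seq_perm // si.
have perm_uniq : uniq [seq seq_of_fun n (fun_of_seq t \o s) | t <- box_tuples h k n].
  by rewrite map_inj_in_uniq ?box_tuples_uniq.
have perm_sub : {subset [seq seq_of_fun n (fun_of_seq t \o s) | t <- box_tuples h k n]
                 <= box_tuples (h \o s) (k \o s) n}.
  move=> t' /mapP[t]; rewrite mem_box_tuples => /andP[_ t_range] ->.
  rewrite mem_box_tuples size_map size_iota eqxx /=.
  by apply/allP => i i_idx; rewrite fun_of_seq_perm //; apply/(allP t_range)/perm_idx_mem.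
have perm_size : (size (box_tuples (h \o s) (k \o s) n) <=
                  size [seq seq_of_fun n (fun_of_seq t \o s) | t <- box_tuples h k n])%N.
  by rewrite size_map !size_box_tuples (big_idx_perm s_perm (fun i => size (zrange (h i) (k i)))).
have [_ eq_mem] := uniq_min_size perm_uniq perm_sub perm_size.
by apply: uniq_perm; rewrite ?box_tuples_uniq.
Qed.

Lemma big_box_perm {T : Type} {id0 : T} {op : Monoid.com_law id0} (F : (nat -> int) -> T) :
  (forall l l', {in idx n, l =1 l'} -> F l = F l') ->
  \big[op/id0]_(l <- box (h \o s) (k \o s) n) F l = \big[op/id0]_(l <- box h k n) F (l \o s).
Proof.
move=> F_ext; have F_seq_of_fun l : F (fun_of_seq (seq_of_fun n l)) = F l.
  by apply: F_ext => i; apply: seq_of_funK.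
transitivity (\big[op/id0]_(t <- box_tuples (h \o s) (k \o s) n) F (fun_of_seq t)).
  by rewrite -map_seq_of_fun_box big_map; apply: eq_bigr => l _; rewrite F_seq_of_fun.
rewrite -(perm_big _ perm_box_tuples) big_map -map_seq_of_fun_box big_map.
apply: eq_bigr => l _; apply: F_ext => i i_idx /=.
by rewrite seq_of_funK //= seq_of_funK //; apply: perm_idx_mem.
Qed.

End BoxPerm.

Section ProductOfPolynomials.
Context {R : realType}.
Variables (h k : nat -> int) (a : nat -> int -> R) (n : nat) (x : R).
Hypothesis x_gt0 : 0 < x.

Lemma prod_poly_box :
  \prod_(i <- idx n) \sum_(l <- zrange (h i) (k i)) a i l * pwz x l =
  \sum_(l <- box h k n) (\prod_(i <- idx n) a i (l i)) * pwz x (lsum n l).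
Proof.
rewrite -sum_box_prod; apply: eq_bigr => l _.
by rewrite big_split /= /lsum pwz_sum.
Qed.

Lemma sum_ccoef_box (K : int) :
  \sum_(r <- zrange (hC h n) K) ccoef h k a n r * pwz x r =
  \sum_(l <- box h k n | lsum n l <= K) (\prod_(i <- idx n) a i (l i)) * pwz x (lsum n l).
Proof.
rewrite /ccoef; under eq_bigr do rewrite mulr_suml big_mkcond.
rewrite exchange_big /= [RHS]big_mkcond.
apply: (eq_big_all (box_in_box h k n)) => l l_box.
rewrite -big_mkcond /= big_zrange_pred1 (lsum_ge_hC l_box) /=.
by case: ifP.
Qed.

Lemma prod_poly_sub_ccoef (K : int) :
  \prod_(i <- idx n) \sum_(l <- zrange (h i) (k i)) a i l * pwz x l
  - \sum_(r <- zrange (hC h n) K) ccoef h k a n r * pwz x r =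
  \sum_(l <- box h k n | K < lsum n l) (\prod_(i <- idx n) a i (l i)) * pwz x (lsum n l).
Proof.
rewrite prod_poly_box sum_ccoef_box (bigID (fun l => lsum n l <= K)) /= addrC addrK.
by apply: eq_bigl => l; rewrite ltNge.
Qed.

End ProductOfPolynomials.

Lemma mem_KB (k : nat -> int) n m : (m \in KB k n) = (m \in idx n) && (k m == kB k n).
Proof. by rewrite mem_filter andbC. Qed.

Lemma KB_neq0 (k : nat -> int) n : (0 < n)%N -> KB k n != [::].
Proof.
rewrite lt0n -idx_eq0 => idx_neq0; have [m m_idx kBm] := minl_mem k idx_neq0.
by apply/eqP => KB0; have := mem_KB k n m; rewrite KB0 m_idx /kB /zminl kBm eqxx.
Qed.

Definition kC_at (h k : nat -> int) (n m : nat) : int := k m + \sum_(r <- idx n | r != m) h r.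

Lemma kCE h k n : kC h k n = zminl (kC_at h k n) (idx n).
Proof. by []. Qed.

Lemma mem_LC h k n m : (m \in LC h k n) = (m \in idx n) && (kC_at h k n m == kC h k n).
Proof. by rewrite mem_filter andbC. Qed.

Lemma LC_neq0 (h k : nat -> int) n : (0 < n)%N -> LC h k n != [::].
Proof.
rewrite lt0n -idx_eq0 => idx_neq0; have [m m_idx kCm] := minl_mem (kC_at h k n) idx_neq0.
by apply/eqP => LC0; have := mem_LC h k n m; rewrite LC0 m_idx kCE /zminl kCm eqxx.
Qed.

Definition majorant {R : realType} (h k : nat -> int) (a : nat -> int -> R) (d G : nat -> R)
    (y : R) (i : nat) : R :=
  \sum_(l <- zrange (h i) (k i)) `|a i l| * pwz y l + G i * powR y ((k i)%:~R + d i).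

Section Family.
Context {R : realType}.
Variables (eps0 : R) (A : nat -> R -> R) (h k : nat -> int) (a : nat -> int -> R)
  (d G ep : nat -> R) (n : nat).
Hypothesis n_gt0 : (0 < n)%N.
Hypothesis A_exp : forall m, m \in idx n ->
  is_expansion eps0 (A m) (h m) (k m) (a m) (d m) (G m) (ep m).

Let idx_neq0 : idx n != [::].
Proof. by rewrite idx_eq0 -lt0n. Qed.

Let d_bounds m : m \in idx n -> 0 < d m <= 1.
Proof. by case/A_exp. Qed.

Let G_gt0 m : m \in idx n -> 0 < G m.
Proof. by case/A_exp. Qed.

Let ep_bounds m : m \in idx n -> 0 < ep m <= eps0.
Proof. by case/A_exp. Qed.

Lemma kB_le m : m \in idx n -> kB k n <= k m.
Proof. exact: minl_le. Qed.

Lemma hB_le m : m \in idx n -> hB h n <= h m.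
Proof. exact: minl_le. Qed.

Lemma eB_le m : m \in idx n -> eB ep n <= ep m.
Proof. exact: minl_le. Qed.

Lemma dB_mem : exists2 m, m \in KB k n & dB k d n = d m.
Proof. by apply: minl_mem; apply: KB_neq0. Qed.

Lemma dB_bounds : 0 < dB k d n <= 1.
Proof. by have [m] := dB_mem; rewrite mem_KB => /andP[/d_bounds dm _] ->. Qed.

Lemma dB_ge_min : rminl d (idx n) <= dB k d n.
Proof. by have [m] := dB_mem; rewrite mem_KB => /andP[m_idx _] ->; apply: minl_le. Qed.

Lemma eB_bounds : 0 < eB ep n <= eps0.
Proof. by rewrite /eB /rminl; have [m /ep_bounds epm ->] := minl_mem ep idx_neq0. Qed.

Lemma hB_le_kB : hB h n <= kB k n.
Proof.
rewrite /kB /zminl; have [m m_idx ->] := minl_mem k idx_neq0.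
by apply: le_trans (hB_le _ m_idx) _; case: (A_exp _ m_idx).
Qed.

(* The other summands have [k m > kB], hence an integer gap of at least [1 >= dB]. *)
Lemma kB_gap m : m \in idx n -> 0 <= (k m)%:~R + d m - (kB k n)%:~R - dB k d n.
Proof.
move=> m_idx; apply: int_gap_ge0; rewrite ?kB_le //; first by case/andP: (d_bounds _ m_idx).
  by case/andP: dB_bounds.
by move=> kBm; apply: minl_le; rewrite mem_KB m_idx kBm eqxx.
Qed.

Lemma GB_gt0 : 0 < GB h k a d G ep n.
Proof.
apply: sumr_gt0_seq => // m m_idx; apply: ltr_wpDr.
  by rewrite big_seq; apply: sumr_ge0 => j _; rewrite mulr_ge0 ?powR_ge0.
by rewrite mulr_gt0 ?powR_gt0 ?G_gt0 //; case/andP: eB_bounds.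
Qed.

Lemma sum_remainder_le x : 0 < x <= eB ep n ->
  `|\sum_(m <- idx n) A m x - \sum_(l <- zrange (hB h n) (kB k n)) bcoef h k a n l * pwz x l|
  <= GB h k a d G ep n * powR x ((kB k n)%:~R + dB k d n).
Proof.
move=> /andP[x_gt0 x_le].
have -> : \sum_(l <- zrange (hB h n) (kB k n)) bcoef h k a n l * pwz x l =
    \sum_(m <- idx n) \sum_(l <- zrange (hB h n) (kB k n)) ext h k a m l * pwz x l.
  by rewrite exchange_big; apply: eq_bigr => l _; rewrite mulr_suml.
rewrite -sumrB; apply: le_trans (ler_norm_sum _ _ _) _.
rewrite /GB mulr_suml big_seq [X in _ <= X]big_seq; apply: ler_sum => m m_idx.
case: (A_exp _ m_idx) => _ _ /ltW G_ge0 _ A_near.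
apply: (@trunc_remainder_le _ (A m x) (h m) (k m) _ _ (a m)) => //.
- by rewrite hB_le.
- exact: hB_le_kB.
- by rewrite kB_le.
- exact: kB_gap.
- by case/andP: dB_bounds.
- by rewrite x_gt0.
- by apply: A_near; rewrite x_gt0 (le_trans x_le) ?eB_le.
Qed.

Lemma expansion_sum :
  is_expansion eps0 (fun x => \sum_(m <- idx n) A m x)
    (hB h n) (kB k n) (bcoef h k a n) (dB k d n) (GB h k a d G ep n) (eB ep n).
Proof. by split; [exact: hB_le_kB | exact: dB_bounds | exact: GB_gt0 | exact: eB_bounds |
                  exact: sum_remainder_le]. Qed.

Local Notation kC := (kC h k n).
Local Notation dC := (dC h k d n).
Local Notation eC := (eC ep n).
Local Notation S := (majorant h k a d G).

Lemma kC_le m : m \in idx n -> kC <= kC_at h k n m.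
Proof. exact: minl_le. Qed.

Lemma eC_le m : m \in idx n -> eC <= ep m.
Proof. exact: minl_le. Qed.

Lemma dC_mem : exists2 m, m \in LC h k n & dC = d m.
Proof. by apply: minl_mem; apply: LC_neq0. Qed.

Lemma dC_bounds : 0 < dC <= 1.
Proof. by have [m] := dC_mem; rewrite mem_LC => /andP[/d_bounds dm _] ->. Qed.

Lemma dC_ge_min : rminl d (idx n) <= dC.
Proof. by have [m] := dC_mem; rewrite mem_LC => /andP[m_idx _] ->; apply: minl_le. Qed.

Lemma eC_bounds : 0 < eC <= eps0.
Proof. by rewrite /eC /rminl; have [m /ep_bounds epm ->] := minl_mem ep idx_neq0. Qed.

Lemma hC_le_kC : hC h n <= kC.
Proof.
rewrite kCE /zminl; have [m m_idx ->] := minl_mem (kC_at h k n) idx_neq0.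
rewrite /hC /kC_at (bigD1_seq m) ?idx_uniq //= lerD2r.
by case: (A_exp _ m_idx).
Qed.

Lemma kC_gap m : m \in idx n -> 0 <= (kC_at h k n m)%:~R + d m - kC%:~R - dC.
Proof.
move=> m_idx; apply: int_gap_ge0; rewrite ?kC_le //; first by case/andP: (d_bounds _ m_idx).
  by case/andP: dC_bounds.
by move=> kCm; apply: minl_le; rewrite mem_LC m_idx kCm eqxx.
Qed.

Lemma majorant_gt0 y i : 0 < y -> i \in idx n -> 0 < S y i.
Proof.
move=> y_gt0 i_idx; apply: ltr_wpDl; last by rewrite mulr_gt0 ?powR_gt0 ?G_gt0.
by rewrite big_seq; apply: sumr_ge0 => l _; rewrite mulr_ge0 // ltW ?pwz_gt0.
Qed.

Lemma GC_gt0 : 0 < GC h k a d G ep n.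
Proof.
have eC_gt0 : 0 < eC by case/andP: eC_bounds.
apply: ltr_wpDl.
  apply: sumr_ge0 => l _; rewrite mulr_ge0 ?powR_ge0 //.
  by apply: prodr_ge0 => i _; exact: normr_ge0.
apply: sumr_gt0_seq => // j j_idx; rewrite !mulr_gt0 ?powR_gt0 ?G_gt0 //.
by rewrite big_seq_cond; apply: prodr_gt0 => i /andP[i_idx _]; apply: majorant_gt0.
Qed.

Lemma majorant_bounds x i : i \in idx n -> 0 < x <= ep i ->
  `|A i x| <= S x i /\ `|\sum_(l <- zrange (h i) (k i)) a i l * pwz x l| <= S x i.
Proof.
move=> i_idx /andP[x_gt0 x_le]; case: (A_exp _ i_idx) => _ _ /ltW G_ge0 _ A_near.
have poly_le : `|\sum_(l <- zrange (h i) (k i)) a i l * pwz x l| <=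
               \sum_(l <- zrange (h i) (k i)) `|a i l| * pwz x l.
  apply: le_trans (ler_norm_sum _ _ _) _; apply: ler_sum => l _.
  by rewrite normrM (gtr0_norm (pwz_gt0 _ _ x_gt0)).
split; last by apply: le_trans poly_le _; rewrite lerDl mulr_ge0 ?powR_ge0.
rewrite -[A i x](subrK (\sum_(l <- zrange (h i) (k i)) a i l * pwz x l)).
apply: le_trans (ler_normD _ _) _; rewrite addrC /majorant; apply: lerD => //.
by apply: A_near; rewrite x_gt0.
Qed.

Lemma majorant_scale x y i : 0 < x <= y -> i \in idx n ->
  S x i * powR y (h i)%:~R <= S y i * powR x (h i)%:~R.
Proof.
move=> xy i_idx; case: (A_exp _ i_idx) => hk_i /andP[d_gt0 _] /ltW G_ge0 _ _.
rewrite /majorant !mulrDl; apply: lerD.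
  rewrite !mulr_suml big_seq [X in _ <= X]big_seq; apply: ler_sum => l.
  rewrite mem_zrange => /andP[hl _]; rewrite -!mulrA; apply: ler_wpM2l => //.
  by apply: powR_swap_le; rewrite // ler_int.
rewrite -!mulrA; apply: ler_wpM2l => //; apply: powR_swap_le => //.
have : (h i)%:~R <= (k i)%:~R :> R by rewrite ler_int.
lra.
Qed.

(* Since [S x i] grows like [x ^ h i], the product over [i != j] contributes the
   factor [x ^ (kC_at j - k j)], which together with [G j x ^ (k j + d j)] reaches
   the order [kC + dC]. *)
Lemma telescope_term_le x j : 0 < x <= eC -> j \in idx n ->
  (\prod_(i <- idx n | i != j) S x i) * (G j * powR x ((k j)%:~R + d j)) <=
  (\prod_(i <- idx n | i != j) S eC i) * G j *
    powR eC ((k j)%:~R + d j - kC%:~R - dC) * powR x (kC%:~R + dC).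
Proof.
move=> /andP[x_gt0 x_le] j_idx; have eC_gt0 : 0 < eC := lt_le_trans x_gt0 x_le.
have Gj_ge0 : 0 <= G j by apply/ltW/G_gt0.
set Sx := \prod_(i <- idx n | i != j) S x i; set Sy := \prod_(i <- idx n | i != j) S eC i.
set H := \sum_(i <- idx n | i != j) ((h i)%:~R : R).
have Sy_ge0 : 0 <= Sy.
  by rewrite /Sy big_seq_cond; apply: prodr_ge0 => i /andP[i_idx _]; apply/ltW/majorant_gt0.
have scale : Sx * powR eC H <= Sy * powR x H.
  apply: prod_le_scaled => // i i_idx _; first exact/ltW/majorant_gt0.
  by apply: majorant_scale; rewrite ?x_gt0.
have gap : kC%:~R + dC <= (k j)%:~R + d j + H.
  by have := kC_gap _ j_idx; rewrite /kC_at intrD rmorph_sum -/H; lra.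
rewrite -(ler_pM2r (powR_gt0 H eC_gt0)).
apply: (@le_trans _ _ (Sy * G j * powR x ((k j)%:~R + d j + H))).
  rewrite [powR x (_ + H)](gt0_powRD _ _ _ x_gt0).
  have -> : Sx * (G j * powR x ((k j)%:~R + d j)) * powR eC H =
            (G j * powR x ((k j)%:~R + d j)) * (Sx * powR eC H) by ring.
  have -> : Sy * G j * (powR x ((k j)%:~R + d j) * powR x H) =
            (G j * powR x ((k j)%:~R + d j)) * (Sy * powR x H) by ring.
  by apply: ler_wpM2l scale; rewrite mulr_ge0 ?powR_ge0.
have split_le : powR x ((k j)%:~R + d j + H) <=
    powR eC ((k j)%:~R + d j + H - kC%:~R - dC) * powR x (kC%:~R + dC).
  by apply: powR_le_split; rewrite ?x_gt0.
apply: le_trans; first by apply: ler_wpM2l; [exact: mulr_ge0 | exact: split_le].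
have -> : (k j)%:~R + d j + H - kC%:~R - dC = ((k j)%:~R + d j - kC%:~R - dC) + H by ring.
by rewrite (gt0_powRD _ _ _ eC_gt0) le_eqVlt; apply/orP; left; apply/eqP; ring.
Qed.

Lemma prod_poly_tail_le x : 0 < x <= eC ->
  `|\sum_(l <- box h k n | kC < lsum n l) (\prod_(i <- idx n) a i (l i)) * pwz x (lsum n l)| <=
  (\sum_(l <- box h k n | kC < lsum n l)
     (\prod_(i <- idx n) `|a i (l i)|) * powR eC ((lsum n l)%:~R - kC%:~R - dC))
  * powR x (kC%:~R + dC).
Proof.
move=> xy; have x_gt0 : 0 < x by case/andP: xy.
apply: le_trans (ler_norm_sum _ _ _) _; rewrite mulr_suml; apply: ler_sum => l kC_lt.
rewrite normrM normr_prod (gtr0_norm (pwz_gt0 _ _ x_gt0)) -mulrA.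
apply: ler_wpM2l; first by apply: prodr_ge0 => i _; exact: normr_ge0.
apply: powR_le_split => //; have : (kC + 1)%:~R <= (lsum n l)%:~R :> R.
  by rewrite ler_int; lia.
by rewrite intrD; case/andP: dC_bounds => _; lra.
Qed.

Lemma prod_remainder_le x : 0 < x <= eC ->
  `|\prod_(m <- idx n) A m x - \sum_(r <- zrange (hC h n) kC) ccoef h k a n r * pwz x r|
  <= GC h k a d G ep n * powR x (kC%:~R + dC).
Proof.
move=> xy; have [x_gt0 x_le] := andP xy.
have x_ep i : i \in idx n -> 0 < x <= ep i.
  by move=> i_idx; rewrite x_gt0 (le_trans x_le) ?eC_le.
set P := fun i => \sum_(l <- zrange (h i) (k i)) a i l * pwz x l.
have -> : \prod_(m <- idx n) A m x - \sum_(r <- zrange (hC h n) kC) ccoef h k a n r * pwz x r =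
    (\prod_(m <- idx n) A m x - \prod_(i <- idx n) P i) +
    (\prod_(i <- idx n) P i - \sum_(r <- zrange (hC h n) kC) ccoef h k a n r * pwz x r) by ring.
rewrite prod_poly_sub_ccoef // /GC mulrDl addrC.
apply: le_trans (ler_normD _ _) _; apply: lerD; first exact: prod_poly_tail_le.
apply: le_trans (telescope_prod_le (fun i => A i x) P (S x) (idx_uniq n) _) _.
  by move=> i i_idx; apply: majorant_bounds; rewrite ?x_ep.
rewrite mulr_suml big_seq [X in _ <= X]big_seq; apply: ler_sum => j j_idx.
apply: (le_trans _ (telescope_term_le _ _ xy j_idx)); apply: ler_wpM2l.
  by rewrite big_seq_cond; apply: prodr_ge0 => i /andP[i_idx _]; apply/ltW/majorant_gt0.
by case: (A_exp _ j_idx) => _ _ _ _; apply; rewrite x_ep.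
Qed.

Lemma expansion_prod :
  is_expansion eps0 (fun x => \prod_(m <- idx n) A m x)
    (hC h n) kC (ccoef h k a n) dC (GC h k a d G ep n) eC.
Proof. by split; [exact: hC_le_kC | exact: dC_bounds | exact: GC_gt0 | exact: eC_bounds |
                  exact: prod_remainder_le]. Qed.

End Family.

Section Permutation.
Context {n : nat} {s : nat -> nat} (s_perm : perm_range n s).
Hypothesis n_gt0 : (0 < n)%N.

Let idx_neq0 : idx n != [::].
Proof. by rewrite idx_eq0 -lt0n. Qed.

Lemma minl_idx_perm {T : realDomainType} (f : nat -> T) : minl (f \o s) (idx n) = minl f (idx n).
Proof.
rewrite minl_comp // (eq_minl_mem f _ _ (perm_mem (perm_idx s_perm))) //.
by rewrite -size_eq0 size_map size_eq0.
Qed.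

Lemma minl_filter_perm {T : realDomainType} (f : nat -> T) (P : pred nat) :
  [seq m <- idx n | P m] != [::] ->
  minl (f \o s) [seq m <- idx n | P (s m)] = minl f [seq m <- idx n | P m].
Proof.
move=> P_neq0; have mem_filter_map : map s [seq m <- idx n | P (s m)] =i [seq m <- idx n | P m].
  by move=> m; rewrite -filter_map !mem_filter (perm_mem (perm_idx s_perm)).
have Ps_neq0 : [seq m <- idx n | P (s m)] != [::].
  apply/eqP => Ps0; move: mem_filter_map; rewrite Ps0 => mem0.
  case E: [seq m <- idx n | P m] P_neq0 => [//|m ms] _.
  by have := mem0 m; rewrite E inE eqxx.
by rewrite minl_comp // (eq_minl_mem f _ _ mem_filter_map) // -size_eq0 size_map size_eq0.
Qed.

Variables (R : realType) (h k : nat -> int) (a : nat -> int -> R) (d G ep : nat -> R).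

Lemma kB_perm : kB (k \o s) n = kB k n.
Proof. exact: minl_idx_perm. Qed.

Lemma eB_perm : eB (ep \o s) n = eB ep n.
Proof. exact: minl_idx_perm. Qed.

Lemma eC_perm : eC (ep \o s) n = eC ep n.
Proof. exact: minl_idx_perm. Qed.

Lemma dB_perm : dB (k \o s) (d \o s) n = dB k d n.
Proof.
rewrite /dB /rminl /KB kB_perm.
exact: (minl_filter_perm d (fun m => k m == kB k n) (KB_neq0 k n n_gt0)).
Qed.

Lemma GB_perm : GB (h \o s) (k \o s) (a \o s) (d \o s) (G \o s) (ep \o s) n = GB h k a d G ep n.
Proof.
rewrite /GB kB_perm dB_perm eB_perm.
exact: (big_idx_perm s_perm (fun i =>
    G i * powR (eB ep n) ((k i)%:~R + d i - (kB k n)%:~R - dB k d n)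
    + \sum_(j <- zrange (kB k n + 1) (k i))
        `|ext h k a i j| * powR (eB ep n) (j%:~R - (kB k n)%:~R - dB k d n))).
Qed.

Lemma kC_at_perm m : m \in idx n -> kC_at (h \o s) (k \o s) n m = kC_at h k n (s m).
Proof. by move=> m_idx; rewrite /kC_at /= (big_idx_perm_neq s_perm h _ m_idx). Qed.

Lemma kC_perm : kC (h \o s) (k \o s) n = kC h k n.
Proof.
rewrite !kCE /zminl (eq_minl_in _ _ _ idx_neq0 kC_at_perm).
exact: (minl_idx_perm (kC_at h k n)).
Qed.

Lemma dC_perm : dC (h \o s) (k \o s) (d \o s) n = dC h k d n.
Proof.
rewrite /dC /rminl.
have -> : LC (h \o s) (k \o s) n = [seq m <- idx n | kC_at h k n (s m) == kC h k n].
  by rewrite /LC kC_perm; apply: eq_in_filter => m m_idx; rewrite -kC_at_perm.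
exact: (minl_filter_perm d (fun m => kC_at h k n m == kC h k n) (LC_neq0 h k n n_gt0)).
Qed.

Lemma lsum_perm l : lsum n (l \o s) = lsum n l.
Proof. exact: (big_idx_perm s_perm l). Qed.

Lemma GC_perm : GC (h \o s) (k \o s) (a \o s) (d \o s) (G \o s) (ep \o s) n = GC h k a d G ep n.
Proof.
rewrite /GC kC_perm dC_perm eC_perm; congr (_ + _).
  rewrite [LHS]big_mkcond [RHS]big_mkcond (big_box_perm s_perm) => [|l l' ll'].
    apply: eq_bigr => l _ /=; rewrite lsum_perm.
    by rewrite (big_idx_perm s_perm (fun i => `|a i (l i)|)).
  have -> : lsum n l = lsum n l' by apply: eq_big_seq => i /ll' ->.
  by congr (if _ then _ * _ else _); apply: eq_big_seq => i /ll' ->.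
pose Phi j := (\prod_(i <- idx n | i != j) majorant h k a d G (eC ep n) i) * G j *
              powR (eC ep n) ((k j)%:~R + d j - (kC h k n)%:~R - dC h k d n).
transitivity (\sum_(j <- idx n) Phi (s j)); last exact: big_idx_perm.
apply: eq_big_seq => j j_idx.
by rewrite /Phi -(big_idx_perm_neq s_perm (majorant h k a d G (eC ep n)) _ j_idx).
Qed.

End Permutation.

Theorem lemma3 (R : realType) (eps0 : R) (N : nat) (A : nat -> R -> R)
    (h k : nat -> int) (a : nat -> int -> R) (d G ep : nat -> R) :
  0 < eps0 <= 1 -> (1 <= N)%N ->
  (forall m, (1 <= m <= N)%N ->
     is_expansion eps0 (A m) (h m) (k m) (a m) (d m) (G m) (ep m)) ->
  forall n, (1 <= n <= N)%N ->
  [/\ is_expansion eps0 (fun x => \sum_(m <- idx n) A m x)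
        (hB h n) (kB k n) (bcoef h k a n) (dB k d n) (GB h k a d G ep n) (eB ep n),
      rminl d (idx n) <= dB k d n,
      is_expansion eps0 (fun x => \prod_(m <- idx n) A m x)
        (hC h n) (kC h k n) (ccoef h k a n) (dC h k d n) (GC h k a d G ep n) (eC ep n),
      rminl d (idx n) <= dC h k d n &
      forall s : nat -> nat, perm_range n s ->
        [/\ dB (k \o s) (d \o s) n = dB k d n,
            GB (h \o s) (k \o s) (a \o s) (d \o s) (G \o s) (ep \o s) n = GB h k a d G ep n &
            eB (ep \o s) n = eB ep n] /\
        [/\ dC (h \o s) (k \o s) (d \o s) n = dC h k d n,
            GC (h \o s) (k \o s) (a \o s) (d \o s) (G \o s) (ep \o s) n = GC h k a d G ep n &
            eC (ep \o s) n = eC ep n]].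
Proof.
move=> _ _ A_exp n /andP[n_gt0 n_le].
have A_exp_n m : m \in idx n -> is_expansion eps0 (A m) (h m) (k m) (a m) (d m) (G m) (ep m).
  by rewrite mem_idx => /andP[m_gt0 m_le]; apply: A_exp; rewrite m_gt0 (leq_trans m_le).
split.
- exact: expansion_sum n_gt0 A_exp_n.
- exact: dB_ge_min n_gt0.
- exact: expansion_prod n_gt0 A_exp_n.
- exact: dC_ge_min n_gt0.
move=> s s_perm; split; split.
- exact: dB_perm.
- exact: GB_perm.
- exact: eB_perm.
- exact: dC_perm.
- exact: GC_perm.
- exact: eC_perm.
Qed.
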